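(* Let $T$ be a finite rooted tree with root $\omega$ having $k\ge 1$ children. Partition the $k$ subtrees rooted at the children of $\omega$ into classes of pairwise isomorphic (rooted) subtrees; let $t$ be the number of classes, $k_i$ the number of subtrees in the $i$-th class, $T_i$ a representative of the $i$-th class, and $A_i$ the automorphism group of the rooted tree $T_i$ ($1\le i\le t$). If a finite group $G$ is representable on $T$, then there exists $1\le i\le t$ and a nontrivial homomorphism from $G$ to $W_{k_i}(A_i)$.
   Context: The automorphism group of a rooted tree is the group of tree automorphisms fixing the root; $G$ is representable on a rooted tree if there is a nontrivial homomorphism from $G$ to its automorphism group. For a group $A$ and $n\ge1$, $W_n(A)$ is the wreath product $S_n\wr A$, i.e. the semidirect product $A^n\rtimes S_n$ in which $S_n$ acts on the direct product $A^n$ by permuting coordinates. *)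

From mathcomp Require Import all_boot all_fingroup.
Set Implicit Arguments. Unset Strict Implicit. Unset Printing Implicit Defensive.
Local Open Scope group_scope.

Section Trees.
Variable V : finType.

(* A finite rooted tree on vertex set V: root r, parent map with parent r = r,
   and every vertex reaches the root by iterating parent. Edges are {v, parent v}, v <> r. *)
Definition is_rooted_tree (r : V) (parent : V -> V) : Prop :=
  parent r = r /\ forall v, exists n, iter n parent v = r.

Definition adj (parent : V -> V) (x y : V) : bool :=
  (x != y) && ((parent x == y) || (parent y == x)).

Definition subtree (parent : V -> V) (c : V) : {set V} :=
  [set v | [exists n : 'I_#|V|, iter n parent v == c]].

Definition is_child (r : V) (parent : V -> V) (c : V) : bool :=
  (c != r) && (parent c == r).

Definition tree_aut (r : V) (parent : V -> V) : {set {perm V}} :=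
  [set p : {perm V} | (p r == r) &&
     [forall x, forall y, adj parent (p x) (p y) == adj parent x y]].

(* automorphism group of the rooted subtree T_c, realised as the permutations of V
   supported on subtree c, fixing c and preserving adjacency inside subtree c *)
Definition subtree_aut (parent : V -> V) (c : V) : {set {perm V}} :=
  [set p : {perm V} | [&& p c == c,
     [forall x, (x \notin subtree parent c) ==> (p x == x)] &
     [forall x in subtree parent c, forall y in subtree parent c,
        adj parent (p x) (p y) == adj parent x y]]].

Definition subtree_iso (parent : V -> V) (c c' : V) : bool :=
  [exists f : {ffun V -> V},
    [&& [forall x in subtree parent c, forall y in subtree parent c,
           (f x == f y) ==> (x == y)],
        f @: subtree parent c == subtree parent c',
        f c == c' &
        [forall x in subtree parent c, forall y in subtree parent c,
           adj parent (f x) (f y) == adj parent x y]]].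

Definition class_size (r : V) (parent : V -> V) (c : V) : nat :=
  #|[set c' | is_child r parent c' && subtree_iso parent c c']|.

End Trees.

Definition is_hom_on (gT hT : finGroupType) (G : {group gT}) (H : {set hT})
  (phi : gT -> hT) : Prop :=
  {in G, forall x, phi x \in H} /\ {in G &, {morph phi : x y / x * y}}.

Definition nontrivial_on (gT : finGroupType) (T : Type) (G : {group gT})
  (one : T) (phi : gT -> T) : Prop :=
  exists2 x, x \in G & phi x <> one.

Definition representable (gT : finGroupType) (G : {group gT})
  (V : finType) (r : V) (parent : V -> V) : Prop :=
  exists phi : gT -> {perm V},
    is_hom_on G (tree_aut r parent) phi /\ nontrivial_on G 1 phi.

(* Wreath product W_n(A) = A^n ⋊ S_n, A a subgroup of a finGroupType aT.
   Elements are pairs (f, s); S_n acts by permuting coordinates: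
   (f, s) * (g, t) = (i |-> f i * g (s i), s * t). *)
Definition wr_elt (aT : finGroupType) (n : nat) : Type :=
  ({ffun 'I_n -> aT} * {perm 'I_n})%type.

Definition wr_mul (aT : finGroupType) (n : nat) (u v : wr_elt aT n) : wr_elt aT n :=
  ([ffun i => u.1 i * v.1 (u.2 i)], u.2 * v.2).

Definition wr_one (aT : finGroupType) (n : nat) : wr_elt aT n :=
  ([ffun _ => 1], 1).

Definition nontrivial_hom_to_wreath (gT aT : finGroupType) (G : {group gT})
  (n : nat) (A : {set aT}) (phi : gT -> wr_elt aT n) : Prop :=
  [/\ {in G, forall x, forall i, (phi x).1 i \in A},
      {in G &, forall x y, phi (x * y) = wr_mul (phi x) (phi y)} &
      nontrivial_on G (wr_one aT n) phi].

(* A tree automorphism fixes the root and commutes with the parent map, so it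
   permutes the children of the root, preserving the isomorphism types of their
   subtrees. If some element of G moves a child c, then G permutes the class of c
   nontrivially, which gives a nontrivial map into the top group S_k of W_k(A).
   Otherwise G fixes every child and so stabilises every subtree at a child; a
   vertex moved by G lies in one of them, and restricting the action to that
   subtree gives a nontrivial map into A, embedded diagonally in W_k(A). *)

From mathcomp Require Import all_boot all_fingroup.
Set Implicit Arguments. Unset Strict Implicit. Unset Printing Implicit Defensive.
Local Open Scope group_scope.

Section WreathEmbeddings.
Variables (gT aT : finGroupType) (G : {group gT}) (A : {set aT}).

Lemma wreath_top_hom n (sigma : gT -> {perm 'I_n}) :
  1 \in A -> {in G &, {morph sigma : x y / x * y}} -> nontrivial_on G 1 sigma ->
  exists phi : gT -> wr_elt aT n, nontrivial_hom_to_wreath G A phi.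
Proof.
move=> A1 sigmaM [x Gx sigma_x].
exists (fun x => ([ffun=> 1], sigma x)); split.
- by move=> y _ i; rewrite ffunE.
- move=> y z Gy Gz; rewrite /wr_mul /= sigmaM //; congr (_, _).
  by apply/ffunP => i; rewrite !ffunE mulg1.
- by exists x => // /(congr1 snd).
Qed.

Lemma wreath_diag_hom n (rho : gT -> aT) :
  0 < n -> {in G, forall x, rho x \in A} -> {in G &, {morph rho : x y / x * y}} ->
  nontrivial_on G 1 rho ->
  exists phi : gT -> wr_elt aT n, nontrivial_hom_to_wreath G A phi.
Proof.
move=> n_gt0 rhoA rhoM [x Gx rho_x].
exists (fun x => ([ffun=> rho x], 1)); split.
- by move=> y Gy i; rewrite ffunE rhoA.
- move=> y z Gy Gz; rewrite /wr_mul /= mulg1; congr (_, _).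
  by apply/ffunP => i; rewrite !ffunE rhoM.
- by exists x => // /(congr1 fst) /ffunP /(_ (Ordinal n_gt0)); rewrite !ffunE.
Qed.

End WreathEmbeddings.

Lemma astabs_perm (T : finType) (C : {set T}) (p : {perm T}) :
  {in C, forall x, p x \in C} -> p \in 'N(C | 'P).
Proof. by move=> pC; rewrite !inE; apply/subsetP => x Cx; rewrite inE pC. Qed.

Section EnumRestrPerm.
Variables (T : finType) (C : {set T}) (c0 : T).
Hypothesis Cc0 : c0 \in C.

Lemma restr_perm_closed (p : {perm T}) x : (restr_perm C p x \in C) = (x \in C).
Proof. exact: perm_closed (restr_perm_on C p). Qed.

Lemma enum_restr_perm_inj (p : {perm T}) :
  injective (fun i : 'I_#|C| => enum_rank_in Cc0 (restr_perm C p (enum_val i))).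
Proof.
move=> i j /= /(congr1 enum_val); rewrite !enum_rankK_in ?restr_perm_closed ?enum_valP //.
by move/perm_inj/enum_val_inj.
Qed.

Definition enum_restr_perm (p : {perm T}) : {perm 'I_#|C|} :=
  perm (@enum_restr_perm_inj p).

Lemma enum_restr_permE p c : p \in 'N(C | 'P) -> c \in C ->
  enum_restr_perm p (enum_rank_in Cc0 c) = enum_rank_in Cc0 (p c).
Proof. by move=> nCp Cc; rewrite permE /= enum_rankK_in // restr_permE. Qed.

Lemma enum_restr_permM :
  {in 'N(C | 'P) &, {morph enum_restr_perm : p q / p * q}}.
Proof.
move=> p q nCp nCq; apply/permP => i.
have Ci := enum_valP i; rewrite -(enum_valK_in Cc0 i) permM !enum_restr_permE //.
- by rewrite permM.
- by rewrite (astabs_act _ nCp).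
- exact: groupM.
Qed.

Lemma enum_restr_perm_eq1 p c : p \in 'N(C | 'P) -> c \in C ->
  enum_restr_perm p = 1 -> p c = c.
Proof.
move=> nCp Cc /permP /(_ (enum_rank_in Cc0 c)).
rewrite enum_restr_permE // perm1; apply: enum_rank_in_inj => //.
by rewrite (astabs_act _ nCp).
Qed.

End EnumRestrPerm.

Section RootedTree.
Variables (V : finType) (r : V) (parent : V -> V).
Hypothesis tree : is_rooted_tree r parent.

Local Notation subtree := (subtree parent).
Local Notation is_child := (is_child r parent).
Local Notation adj := (adj parent).
Local Notation tree_aut := (tree_aut r parent).

Lemma parent_root : parent r = r. Proof. by case: tree. Qed.

Lemma iter_parent_root n : iter n parent r = r.
Proof. by elim: n => //= n ->; rewrite parent_root. Qed.

Lemma iter_parent_cycle k v : iter k.+1 parent v = v -> v = r.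
Proof.
move=> cycle_v; have [_ /(_ v) [n root_v]] := tree.
have iter_cycle m : iter (m * k.+1) parent v = v.
  by elim: m => [|m IHm]; rewrite ?mul0n // mulSn iterD IHm cycle_v.
by rewrite -(iter_cycle n) mulnS addnC iterD root_v iter_parent_root.
Qed.

Lemma parent_neq v : v != r -> parent v != v.
Proof. by apply: contra => /eqP fix_v; apply/eqP/(@iter_parent_cycle 0). Qed.

Lemma parent_parent_neq v : v != r -> parent (parent v) != v.
Proof. by apply: contra => /eqP cycle_v; apply/eqP/(@iter_parent_cycle 1). Qed.

Lemma adj_parent v : v != r -> adj v (parent v).
Proof. by move=> vr; rewrite /adj eq_sym parent_neq //= eqxx. Qed.

Lemma mem_subtree v c : fconnect parent v c -> v \in subtree c.
Proof.
move=> vc; rewrite inE; apply/existsP.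
exists (Ordinal (leq_trans (findex_max vc) (max_card _))).
by rewrite /= iter_findex.
Qed.

Lemma subtree_self c : c \in subtree c.
Proof. exact/mem_subtree/connect0. Qed.

Lemma child_ancestor v : v != r -> exists2 c, is_child c & v \in subtree c.
Proof.
move=> vr; have [_ /(_ v) [n /eqP root_v]] := tree.
have ex_root : exists n, iter n parent v == r by exists n.
case: (ex_minnP ex_root) => -[|m] /eqP root_m min_m; first by rewrite -root_m eqxx in vr.
exists (iter m parent v); last exact/mem_subtree/fconnect_iter.
rewrite /is_child -iterS root_m eqxx andbT; apply: contraTneq (leqnn m) => root_m'.
by rewrite -ltnNge min_m ?root_m'.
Qed.

Lemma tree_autP p : p \in tree_aut ->
  p r = r /\ forall x y, adj (p x) (p y) = adj x y.
Proof.
rewrite inE => /andP [/eqP p_r /forallP p_adj]; split => // x y.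
exact/eqP/(forallP (p_adj x) y).
Qed.

Lemma tree_autV p : p \in tree_aut -> p^-1 \in tree_aut.
Proof.
move=> /tree_autP [p_r p_adj]; rewrite inE; apply/andP; split.
  by rewrite -{1}p_r permK.
by apply/forallP => x; apply/forallP => y; rewrite -p_adj !permKV.
Qed.

Lemma tree_aut_parent p v : p \in tree_aut -> p (parent v) = parent (p v).
Proof.
move=> /tree_autP [p_r p_adj]; have [_ /(_ v) [n]] := tree.
elim: n v => [v /= -> | n IHn v]; first by rewrite parent_root p_r parent_root.
rewrite iterSr => /IHn p_parent2.
have [-> | vr] := eqVneq v r; first by rewrite parent_root p_r parent_root.
(* Otherwise p v = parent (p (parent v)) = p (parent (parent v)): a 2-cycle. *)
have := adj_parent vr; rewrite -p_adj => /andP [_ /orP [/eqP // | /eqP p_v]].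
have := parent_parent_neq vr.
by rewrite (perm_inj (etrans p_parent2 p_v)) eqxx.
Qed.

Lemma tree_aut_iter p n v : p \in tree_aut ->
  p (iter n parent v) = iter n parent (p v).
Proof. by move=> autp; elim: n => //= n <-; rewrite tree_aut_parent. Qed.

Lemma tree_aut_subtree p c v : p \in tree_aut ->
  (p v \in subtree (p c)) = (v \in subtree c).
Proof.
have mapP q d w : q \in tree_aut -> w \in subtree d -> q w \in subtree (q d).
  move=> autq; rewrite !inE => /existsP [n /eqP wc]; apply/existsP; exists n.
  by rewrite -tree_aut_iter // wc.
move=> autp; apply/idP/idP; last exact: mapP.
by move/(mapP _ _ _ (tree_autV autp)); rewrite !permK.
Qed.

Lemma tree_aut_imset_subtree p c : p \in tree_aut -> p @: subtree c = subtree (p c).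
Proof.
move=> autp; apply/setP => w; apply/imsetP/idP => [[u cu ->]|cw].
  by rewrite tree_aut_subtree.
by exists (p^-1 w); rewrite ?permKV // -(tree_aut_subtree _ _ autp) permKV.
Qed.

Lemma tree_aut_child p c : p \in tree_aut -> is_child c -> is_child (p c).
Proof.
move=> autp /andP [cr /eqP c_parent]; have [p_r _] := tree_autP autp.
by rewrite /is_child -tree_aut_parent // c_parent p_r eqxx -{1}p_r (inj_eq perm_inj) cr.
Qed.

Lemma subtree_iso_refl c : subtree_iso parent c c.
Proof.
apply/existsP; exists [ffun v => v]; apply/and4P; split.
- by apply/forallP => x; apply/implyP => _; apply/forallP => y; rewrite !ffunE implybb implybT.
- by apply/eqP/setP => w; rewrite (eq_imset _ (ffunE _)) imset_id.
- by rewrite ffunE.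
- by apply/forallP => x; apply/implyP => _; apply/forallP => y; rewrite !ffunE eqxx implybT.
Qed.

Lemma subtree_iso_aut p c c' : p \in tree_aut -> subtree_iso parent c c' ->
  subtree_iso parent c (p c').
Proof.
move=> autp /existsP [f /and4P [f_inj /eqP f_im /eqP f_c f_adj]].
apply/existsP; exists [ffun v => p (f v)]; apply/and4P; split.
- apply/forallP => x; apply/implyP => cx; apply/forallP => y; apply/implyP => cy.
  rewrite !ffunE (inj_eq perm_inj).
  exact: (implyP (forallP (implyP (forallP f_inj x) cx) y) cy).
- rewrite -(tree_aut_imset_subtree _ autp) -f_im -imset_comp.
  by apply/eqP/eq_imset => v; rewrite ffunE.
- by rewrite ffunE f_c.
- apply/forallP => x; apply/implyP => cx; apply/forallP => y; apply/implyP => cy.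
  rewrite !ffunE (tree_autP autp).2.
  exact: (implyP (forallP (implyP (forallP f_adj x) cx) y) cy).
Qed.

(* [class_size r parent c] is [#|child_class c|] by conversion. *)
Definition child_class c := [set c' | is_child c' && subtree_iso parent c c'].

Lemma child_class_self c : is_child c -> c \in child_class c.
Proof. by rewrite inE subtree_iso_refl andbT. Qed.

Lemma tree_aut_astabs_child_class p c : p \in tree_aut -> p \in 'N(child_class c | 'P).
Proof.
move=> autp; apply: astabs_perm => c'; rewrite !inE => /andP [child_c' iso_cc'].
by rewrite tree_aut_child ?subtree_iso_aut.
Qed.

Lemma tree_aut_astabs_subtree p c : p \in tree_aut -> p c = c ->
  p \in 'N(subtree c | 'P).
Proof. by move=> autp p_c; apply: astabs_perm => v; rewrite -{2}p_c tree_aut_subtree. Qed.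

Lemma subtree_aut1 c : 1 \in subtree_aut parent c.
Proof.
rewrite inE perm1 eqxx /=; apply/andP; split.
  by apply/forallP => x; rewrite perm1 eqxx implybT.
by apply/forallP => x; apply/implyP => _; apply/forallP => y; rewrite !perm1 eqxx implybT.
Qed.

Lemma restr_perm_subtree_aut p c : p \in tree_aut -> p c = c ->
  restr_perm (subtree c) p \in subtree_aut parent c.
Proof.
move=> autp p_c; have nSp := tree_aut_astabs_subtree autp p_c.
rewrite inE restr_permE ?subtree_self // p_c eqxx /=; apply/andP; split.
  by apply/forallP => x; apply/implyP => /(out_perm (restr_perm_on _ _)) ->.
apply/forallP => x; apply/implyP => cx; apply/forallP => y; apply/implyP => cy.
by rewrite !restr_permE // (tree_autP autp).2.
Qed.

Section Representation.
Variables (gT : finGroupType) (G : {group gT}) (phi : gT -> {perm V}).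
Hypothesis phi_hom : is_hom_on G tree_aut phi.

Lemma moved_child_wreath_hom x c : x \in G -> is_child c -> phi x c != c ->
  exists Phi : gT -> wr_elt (perm_of V) (class_size r parent c),
    nontrivial_hom_to_wreath G (subtree_aut parent c) Phi.
Proof.
move=> Gx child_c moved_c; have [phiA phiM] := phi_hom.
have cC := child_class_self child_c.
have nCphi y : y \in G -> phi y \in 'N(child_class c | 'P).
  by move=> Gy; apply/tree_aut_astabs_child_class/phiA.
apply: (wreath_top_hom (sigma := fun y => enum_restr_perm cC (phi y))).
- exact: subtree_aut1.
- by move=> y z Gy Gz /=; rewrite phiM // enum_restr_permM ?nCphi.
- exists x => // /(enum_restr_perm_eq1 (nCphi _ Gx) cC) /eqP.
  by rewrite (negPf moved_c).
Qed.

Lemma fixed_children_wreath_hom :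
  {in G, forall x c, is_child c -> phi x c = c} -> nontrivial_on G 1 phi ->
  exists c, is_child c /\
    exists Phi : gT -> wr_elt (perm_of V) (class_size r parent c),
      nontrivial_hom_to_wreath G (subtree_aut parent c) Phi.
Proof.
move=> fixed [x Gx nontriv_x]; have [phiA phiM] := phi_hom.
have [v moved_v] : exists v, phi x v != v.
  apply/existsP; apply: contra_notT nontriv_x => /existsPn fixed_all.
  by apply/permP => v; rewrite perm1; apply/eqP/negPn.
have vr : v != r by apply: contraNneq moved_v => ->; rewrite (tree_autP (phiA _ Gx)).1.
have [c child_c cv] := child_ancestor vr.
have nSphi y : y \in G -> phi y \in 'N(subtree c | 'P).
  by move=> Gy; rewrite tree_aut_astabs_subtree ?phiA ?fixed.
exists c; split => //.
apply: (wreath_diag_hom (rho := fun y => restr_perm (subtree c) (phi y))).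
- by apply/card_gt0P; exists c; exact: child_class_self.
- by move=> y Gy; rewrite restr_perm_subtree_aut ?phiA ?fixed.
- by move=> y z Gy Gz /=; rewrite phiM // morphM ?nSphi.
- exists x => // /permP /(_ v); rewrite restr_permE ?nSphi // perm1 => /eqP.
  by rewrite (negPf moved_v).
Qed.

End Representation.

End RootedTree.

Theorem mainTheorem13 (V : finType) (r : V) (parent : V -> V)
  (gT : finGroupType) (G : {group gT}) :
  is_rooted_tree r parent ->
  (exists c, is_child r parent c) ->
  representable G r parent ->
  exists c, is_child r parent c /\
    exists phi : gT -> @wr_elt (perm_of V) (class_size r parent c),
      nontrivial_hom_to_wreath G (subtree_aut parent c) phi.
Proof.
(* The existence of a child also follows from representability. *)
move=> tree _ [phi [phi_hom nontriv]].
have [/existsP [x /andP [Gx /existsP [c /andP [child_c moved_c]]]] | fixed] :=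
  boolP [exists x in G, exists c, is_child r parent c && (phi x c != c)].
  by exists c; split; last apply: (moved_child_wreath_hom tree phi_hom Gx child_c moved_c).
apply: (fixed_children_wreath_hom tree phi_hom) => // x Gx c child_c.
apply/eqP; apply: contraNT fixed => moved_c.
by apply/existsP; exists x; rewrite Gx; apply/existsP; exists c; rewrite child_c.
Qed.
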